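(* Let $\lambda$ be a positive integer, let $\mathbb{F}$ be a finite field with $|\mathbb{F}| = q$ where $\lambda^2/2 \le q \le 2\lambda^2$, and let $m = \lambda^{100}$. For sets $U_1,\dots,U_m \subseteq \mathbb{F}\times\mathbb{F}$, let $M \in \mathbb{F}^{m \times (\mathbb{F}\times\mathbb{F})}$ be the matrix with entries $M_{i,(\alpha,\beta)} = \mathbf{1}[(\alpha,\beta)\in U_i]$ (entries $0,1 \in \mathbb{F}$), and consider the algorithm that outputs ``Case (1)'' if $\mathrm{rank}_{\mathbb{F}}(M) < q^2-q+1$ and ``Case (2)'' otherwise. Let $\pi$ be any permutation of $\mathbb{F}\times\mathbb{F}$. Then, for all sufficiently large $\lambda$: (i) If $p_1,\dots,p_m \in \mathbb{F}[X]$ are any polynomials of degree at most $\lambda$ and $U_i = \{\pi(x,p_i(x)) : x\in\mathbb{F}\}$, the algorithm outputs ``Case (1)'' (with probability $1$). (ii) If $q_1,\dots,q_m:\mathbb{F}\to\mathbb{F}$ are independent uniformly random functions and $U_i = \{\pi(x,q_i(x)) : x\in\mathbb{F}\}$, the algorithm outputs ``Case (2)'' with probability at least $1-e^{-\lambda^{97}}$ over the choice of $q_1,\dots,q_m$; in fact, with this probability $\mathrm{rank}_{\mathbb{F}}(M) = q^2-q+1$.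
   Context: This refutes the conjecture that, for uniformly random $\pi$, random polynomials $p_i$ of degree $\le\lambda$ and random functions $q_i$, the tuples $(\{\pi(x,p_i(x)):x\in\mathbb{F}\})_{i\le m}$ and $(\{\pi(x,q_i(x)):x\in\mathbb{F}\})_{i\le m}$ are computationally indistinguishable. The rank is over the field $\mathbb{F}$. *)

From Stdlib Require Import Reals.
From mathcomp Require Import all_boot all_order all_algebra all_fingroup.
Set Implicit Arguments. Unset Strict Implicit. Unset Printing Implicit Defensive.
Import GRing.Theory.
Local Open Scope ring_scope.

Definition graph_set (F : finFieldType) (pi : {perm F * F}) (f : F -> F)
  : {set F * F} := [set pi (x, f x) | x : F].

Definition incmx (F : finFieldType) (m : nat) (U : 'I_m -> {set F * F})
  : 'M[F]_(m, #|{: F * F}|) :=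
  \matrix_(i < m, j < #|{: F * F}|) (if enum_val j \in U i then 1 else 0).

Inductive outcome := Case1 | Case2.

Definition algo (F : finFieldType) (m : nat) (U : 'I_m -> {set F * F}) : outcome :=
  if (\rank (incmx U) < #|F| ^ 2 - #|F| + 1)%N then Case1 else Case2.

Definition is_case2 (o : outcome) : bool := if o is Case2 then true else false.

From Stdlib Require Import Reals Lra.
From mathcomp Require Import all_boot all_order all_algebra all_fingroup.
From mathcomp Require Import cyclic zify.
Set Implicit Arguments. Unset Strict Implicit. Unset Printing Implicit Defensive.
Import GRing.Theory.
Local Open Scope ring_scope.

(* Read a row vector indexed by F x F, through pi, as a function h on the plane:
   it lies in the left kernel of M iff h sums to 0 along every graph U_i. The
   functions h (x, y) = c x with sum_x c x = 0 form a (q-1)-dimensional space D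
   inside every such kernel, so rank M <= q^2 - q + 1, with equality iff the
   kernel is D. For polynomials of degree < q - 1 the kernel also contains
   (x, y) |-> y, since sum_x x^k = 0 for k < q - 1, whence rank M <= q^2 - q.
   For random functions, a fixed h outside D sums to 0 along a random graph with
   probability at most 1 - 1/q (resample the value at a point where h (x, .) is
   not constant), and a union bound over the at most q^(q^2) vectors h gives a
   failure probability at most q^(q^2) (1 - 1/q)^m <= exp (q^3 - m/q). *)

Section PowerSums.
Variable F : finFieldType.

Lemma natr_card_finField : #|F|%:R = 0 :> F.
Proof. by rewrite -cardsT -FinRing.zmodXgE expg_cardG // inE. Qed.

(* Otherwise all #|F| - 1 nonzero elements would be roots of X^k - 1. *)
Lemma exists_expf_neq1 k : (0 < k < #|F|.-1)%N -> exists2 c : F, c != 0 & c ^+ k != 1.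
Proof.
case/andP=> k_gt0 k_lt; apply/exists_inP; apply: contraLR k_lt.
rewrite negb_exists_in => /forall_inP ck1; rewrite -leqNgt -(cardC1 (0 : F)) cardE.
apply: max_unity_roots k_gt0 _ (enum_uniq _) => //.
apply/allP=> c; rewrite mem_enum inE => c0; rewrite unity_rootE.
by have := ck1 c; rewrite c0 => /(_ isT) /negbNE.
Qed.

Lemma sum_expf_eq0 k : (k < #|F|.-1)%N -> \sum_(x : F) x ^+ k = 0.
Proof.
case: k => [|k] k_lt.
  by rewrite (eq_bigr (fun=> 1)) ?sumr_const ?natr_card_finField // => x _; rewrite expr0.
have [c c0 ck] := @exists_expf_neq1 k.+1 k_lt.
have sumM : \sum_(x : F) x ^+ k.+1 = c ^+ k.+1 * \sum_(x : F) x ^+ k.+1.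
  rewrite mulr_sumr (reindex_inj (mulfI c0)) /=.
  by apply: eq_bigr => x _; rewrite exprMn.
apply/eqP; have : (c ^+ k.+1 - 1) * \sum_(x : F) x ^+ k.+1 == 0.
  by rewrite mulrBl mul1r -sumM subrr.
by rewrite mulf_eq0 subr_eq0 (negbTE ck).
Qed.

Lemma sum_horner_eq0 (p : {poly F}) : (size p <= #|F|.-1)%N -> \sum_(x : F) p.[x] = 0.
Proof.
move=> sz_p; under eq_bigr do rewrite horner_coef.
rewrite exchange_big big1 // => i _.
by rewrite -mulr_sumr sum_expf_eq0 ?mulr0 // (leq_trans (ltn_ord i)).
Qed.

End PowerSums.

Lemma card_bigcup_le (T I : finType) (P : {pred I}) (E : I -> {set T}) (B : {set T}) :
  B \subset \bigcup_(i in P) E i -> (#|B| <= \sum_(i in P) #|E i|)%N.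
Proof.
move/subset_leq_card/leq_trans; apply.
elim/big_rec2: _ => [|i U k _ IH]; first by rewrite cards0.
by rewrite (leq_trans (leq_card_setU _ _)) // leq_add2l.
Qed.

Section FunctionCounting.
Variables (aT rT : finType).

Definition ffun_upd (f : {ffun aT -> rT}) (x0 : aT) (y : rT) : {ffun aT -> rT} :=
  [ffun x => if x == x0 then y else f x].

Lemma card_ffun_fiber_le (x0 : aT) (k : nat) (P : pred {ffun aT -> rT}) :
  (forall f, #|[set y | P (ffun_upd f x0 y)]| <= k)%N ->
  (#|[set f | P f]| <= k * #|rT| ^ #|aT|.-1)%N.
Proof.
move=> fiberP; have aT_gt0 : (0 < #|aT|)%N by apply/card_gt0P; exists x0.
have [rT0 | rT_gt0] := posnP #|rT|.
  apply: leq_trans (subset_leq_card (subsetT _)) _.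
  by rewrite cardsT card_ffun rT0 exp0n.
(* Double counting through the involution (f, y) |-> (f[x0 := y], f x0). *)
pose phi (p : {ffun aT -> rT} * rT) := (ffun_upd p.1 x0 p.2, p.1 x0).
have phiK : involutive phi.
  move=> [f y]; rewrite /phi /ffun_upd /= ffunE eqxx; congr pair.
  by apply/ffunP => x; rewrite !ffunE; case: eqP => // ->.
have sum_fst : (\sum_(p : {ffun aT -> rT} * rT) P p.1 = #|[set f | P f]| * #|rT|)%N.
  rewrite -(pair_big xpredT xpredT (fun f (_ : rT) => (P f : nat))) /=.
  under eq_bigr do rewrite sum_nat_const.
  rewrite -big_distrr /= mulnC -sum1dep_card [in RHS]big_mkcond /=.
  by congr muln; apply: eq_bigr => f _; case: (P f).
have sum_upd : (\sum_(p : {ffun aT -> rT} * rT) P (phi p).1 <= #|rT| ^ #|aT| * k)%N.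
  rewrite -(pair_big xpredT xpredT (fun f y => (P (phi (f, y)).1 : nat))) /=.
  rewrite -card_ffun -sum_nat_const; apply: leq_sum => f _.
  by apply: leq_trans (fiberP f); rewrite -sum1dep_card [X in (_ <= X)%N]big_mkcond.
rewrite -(leq_pmul2r rT_gt0) -sum_fst (reindex_inj (inv_inj phiK)).
by apply: leq_trans sum_upd _; rewrite mulnC -mulnA -expnSr prednK.
Qed.

Lemma card_sum_ffun_eq0_le (V : zmodType) (h : aT -> rT -> V) (x0 : aT) (y1 y2 : rT) :
  h x0 y1 != h x0 y2 ->
  (#|[set f : {ffun aT -> rT} | (\sum_x h x (f x) == 0)%R]| <= #|rT|.-1 * #|rT| ^ #|aT|.-1)%N.
Proof.
move=> h_y12.
apply: (card_ffun_fiber_le (x0 := x0) (P := fun f => \sum_x h x (f x) == 0)) => f.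
set S := [set y | _].
have sum_upd y : \sum_x h x (ffun_upd f x0 y x) = h x0 y + \sum_(x | x != x0) h x (f x).
  rewrite (bigD1 x0) //= ffunE eqxx; congr (_ + _).
  by apply: eq_bigr => x /negbTE x_neq0; rewrite ffunE x_neq0.
have : S != setT.
  apply: contra h_y12 => /eqP S_T; move: (in_setT y1) (in_setT y2).
  rewrite -S_T !inE !sum_upd => /eqP sum_y1 /eqP sum_y2.
  by apply/eqP/(addIr (\sum_(x | x != x0) h x (f x))); rewrite sum_y1 sum_y2.
rewrite -properT => /proper_card; rewrite cardsT => S_lt.
by rewrite -ltnS (leq_trans S_lt) ?leqSpred.
Qed.
End FunctionCounting.

Section IncidenceKernel.
Variables (F : finFieldType) (pi : {perm F * F}).
Local Notation n := #|{: F * F}|.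
Local Notation M f := (incmx (fun i => graph_set pi (f i))).
Local Notation pi_coord u z := (u 0 (enum_rank (pi z))).

Lemma mul_incmx_tr k m (A : 'M[F]_(k, n)) (f : 'I_m -> F -> F) r i :
  (A *m (M f)^T) r i = \sum_x A r (enum_rank (pi (x, f i x))).
Proof.
rewrite !mxE (reindex (@enum_rank _)); last first.
  by exists enum_val => z _; [exact: enum_rankK | exact: enum_valK].
rewrite (eq_bigr (fun z => if z \in graph_set pi (f i) then A r (enum_rank z) else 0)).
  by rewrite -big_mkcond big_imset // => x y _ _ /perm_inj [].
by move=> z _; rewrite !mxE enum_rankK; case: ifP; rewrite ?mulr1 ?mulr0.
Qed.

Definition fun_mx (G : F -> F * F -> F) : 'M[F]_(#|F|, n) :=
  \matrix_(r, j) G (enum_val r) ((pi^-1)%g (enum_val j)).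

Lemma fun_mx_pi G r z : fun_mx G r (enum_rank (pi z)) = G (enum_val r) z.
Proof. by rewrite mxE enum_rankK permK. Qed.

Lemma mul_fun_mx_pi G (v : 'rV[F]_#|F|) z :
  pi_coord (v *m fun_mx G) z = \sum_a v 0 (enum_rank a) * G a z.
Proof.
rewrite mxE (reindex (@enum_rank _)); last first.
  by exists enum_val => a _; [exact: enum_rankK | exact: enum_valK].
by apply: eq_bigr => a _; rewrite fun_mx_pi enum_rankK.
Qed.

Lemma fun_mx_mul_incmx_tr G m (f : 'I_m -> F -> F) :
  (forall a i, \sum_x G a (x, f i x) = 0) -> fun_mx G *m (M f)^T = 0.
Proof.
move=> G_orth; apply/matrixP => r i; rewrite mul_incmx_tr mxE.
by under eq_bigr do rewrite fun_mx_pi; apply: G_orth.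
Qed.

(* Row a != 0 of Dmx is the difference of the indicators of the vertical lines
   x = a and x = 0, which every graph meets exactly once; row 0 is zero. *)
Definition vline_diff (a : F) (z : F * F) : F :=
  if a == 0 then 0 else (z.1 == a)%:R - (z.1 == 0)%:R.
Definition vline_diff_y (a : F) (z : F * F) : F :=
  if a == 0 then z.2 else vline_diff a z.
Definition Dmx := fun_mx vline_diff.
Definition Bmx := fun_mx vline_diff_y.

Lemma sum_vline_diff_graph a (f : F -> F) : \sum_x vline_diff a (x, f x) = 0.
Proof.
rewrite /vline_diff; have [//|a_neq0] := eqVneq a 0; first by rewrite big1.
rewrite sumrB (bigD1 a) //= eqxx big1 => [|x /negbTE -> //].
by rewrite (bigD1 0) //= eqxx big1 => [|x /negbTE -> //]; rewrite subrr.
Qed.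

Lemma sum_vline_diff_y_poly a (p : {poly F}) :
  (size p <= #|F|.-1)%N -> \sum_x vline_diff_y a (x, p.[x]) = 0.
Proof.
rewrite /vline_diff_y; have [_|_ _] := eqVneq a 0; first exact: sum_horner_eq0.
exact: sum_vline_diff_graph.
Qed.

Lemma row_free_Bmx : row_free Bmx.
Proof.
rewrite -kermx_eq0; apply/eqP/row_matrixP => r; rewrite row0.
set u := row r _; have uB : u *m Bmx = 0 by rewrite -row_mul mulmx_ker row0.
pose c a := u 0 (enum_rank a).
have c_rel z : \sum_a c a * vline_diff_y a z = 0.
  by rewrite -mul_fun_mx_pi uB mxE.
have c_nz b : b != 0 -> c b = 0.
  move=> b_neq0; have := c_rel (b, 0); rewrite (bigD1 b) //= big1 => [|a a_neq_b].
    by rewrite /vline_diff_y /vline_diff (negbTE b_neq0) eqxx subr0 mulr1 addr0.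
  rewrite /vline_diff_y /vline_diff; case: eqP => [->|_]; first by rewrite mulr0.
  by rewrite /= eq_sym (negbTE a_neq_b) (negbTE b_neq0) subrr mulr0.
have c0 : c 0 = 0.
  have := c_rel (0, 1); rewrite (bigD1 0) //= big1 => [|a /c_nz ->]; last by rewrite mul0r.
  by rewrite /vline_diff_y eqxx mulr1 addr0.
apply/rowP => j; rewrite [RHS]mxE -[j]enum_valK; change (c (enum_val j) = 0).
by have [->|/c_nz] := eqVneq (enum_val j) 0.
Qed.

Lemma mxrank_Dmx : \rank Dmx = #|F|.-1.
Proof.
pose r0 := enum_rank (0 : F); pose E := delta_mx r0 ord0 *m row r0 Bmx.
have Bdef : Bmx = Dmx + E.
  apply/matrixP => r j; rewrite !mxE big_ord1 !mxE /= eqxx andbT.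
  rewrite /vline_diff_y /vline_diff; have [->|r_neq] := eqVneq r r0.
    by rewrite /r0 enum_rankK eqxx mul1r add0r.
  have -> : (enum_val r == 0) = false.
    by apply: contraNF r_neq => /eqP r_0; rewrite /r0 -r_0 enum_valK.
  by rewrite mul0r addr0.
have rank_E : (\rank E <= 1)%N := leq_trans (mxrankM_maxl _ _) (rank_leq_col _).
have rank_B : (#|F| <= \rank Dmx + \rank E)%N.
  by rewrite -{1}(eqP row_free_Bmx) Bdef mxrank_add.
have rank_D : (\rank Dmx < #|F|)%N.
  have Dr0 : row r0 Dmx = 0 by apply/rowP => j; rewrite !mxE enum_rankK /vline_diff eqxx.
  by move: Dr0; rewrite rowE => /sub_kermxP/mxrankS; rewrite mxrank_delta mxrank_ker subn_gt0.
lia.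
Qed.

Lemma sub_Dmx (u : 'rV[F]_n) :
  (forall x y, pi_coord u (x, y) = pi_coord u (x, 0)) ->
  \sum_x pi_coord u (x, 0) = 0 -> (u <= Dmx)%MS.
Proof.
pose h z := pi_coord u z; move=> h_x h_sum; apply/submxP.
exists (\row_r (if enum_val r == 0 then 0 else h (enum_val r, 0))).
apply/rowP => j; have -> : j = enum_rank (pi ((pi^-1)%g (enum_val j))).
  by rewrite permKV enum_valK.
case: ((pi^-1)%g (enum_val j)) => x y; rewrite /Dmx mul_fun_mx_pi h_x.
under eq_bigr do rewrite mxE enum_rankK.
have [->|x_neq0] := eqVneq x 0.
  rewrite (bigD1 0) //= eqxx mul0r add0r.
  under eq_bigr => a a_neq0.
    rewrite (negbTE a_neq0) /vline_diff (negbTE a_neq0) eq_sym (negbTE a_neq0).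
    by rewrite eqxx sub0r mulrN1 over.
  by move/eqP: h_sum; rewrite (bigD1 0) //= addr_eq0 sumrN => /eqP.
rewrite (bigD1 x) //= big1 => [|a a_neq_x]; rewrite /vline_diff.
  by rewrite !(negbTE x_neq0) eqxx subr0 mulr1 addr0.
by case: eqP => [|_]; rewrite ?mul0r // eq_sym (negbTE a_neq_x) (negbTE x_neq0) subrr mulr0.
Qed.

Lemma mxrank_incmx_poly_graph m (p : 'I_m -> {poly F}) :
  (forall i, size (p i) <= #|F|.-1)%N ->
  (\rank (incmx (fun i => graph_set pi (fun x => (p i).[x]))) <= #|F| ^ 2 - #|F|)%N.
Proof.
move=> sz_p; set A := incmx _.
have B_ker : (Bmx <= kermx A^T)%MS.
  apply/sub_kermxP/(fun_mx_mul_incmx_tr (f := fun i x => (p i).[x])) => a i.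
  exact: sum_vline_diff_y_poly.
have := mxrankS B_ker; rewrite mxrank_ker mxrank_tr (eqP row_free_Bmx).
have := rank_leq_col A; have : n = (#|F| * #|F|)%N := card_prod _ _.
rewrite -mulnn; lia.
Qed.

Lemma mxrank_incmx_graph m (f : 'I_m -> F -> F) :
  (kermx (M f)^T <= Dmx)%MS -> \rank (M f) = (#|F| ^ 2 - #|F| + 1)%N.
Proof.
move=> ker_D; have D_ker : (Dmx <= kermx (M f)^T)%MS.
  by apply/sub_kermxP/fun_mx_mul_incmx_tr => a i; exact: sum_vline_diff_graph.
have := mxrankS ker_D; have := mxrankS D_ker; rewrite !mxrank_ker mxrank_tr mxrank_Dmx.
have := rank_leq_col (M f); have : n = (#|F| * #|F|)%N := card_prod _ _.
have : (1 < #|F|)%N := card_finNzRing_gt1 F; rewrite -mulnn; nia.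
Qed.

Lemma card_graph_orth_le (u : 'rV[F]_n) : ~~ (u <= Dmx)%MS ->
  (#|[set f : {ffun F -> F} | (\sum_x pi_coord u (x, f x) == 0)%R]|
     <= #|F|.-1 * #|F| ^ #|F|.-1)%N.
Proof.
move=> u_notin_D; pose h x y := pi_coord u (x, y).
case: (boolP [exists x, exists y, h x y != h x 0]) => [/existsP[x /existsP[y h_y]] | ].
  exact: card_sum_ffun_eq0_le h_y.
rewrite negb_exists => /forallP h_x.
have {}h_x x y : h x y = h x 0.
  by apply/eqP; move: (h_x x); rewrite negb_exists => /forallP/(_ y); rewrite negbK.
have sum_neq0 : \sum_x h x 0 != 0 by apply: contra u_notin_D => /eqP; exact: sub_Dmx.
apply: (@leq_trans 0) => //; rewrite leqn0 cards_eq0; apply/eqP/setP => f.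
by rewrite !inE (eq_bigr (fun x => h x 0)) ?(negbTE sum_neq0) // => x _; exact: h_x.
Qed.

Lemma card_incmx_graph_rank_neq m :
  (#|[set Q : {ffun 'I_m -> {ffun F -> F}} | \rank (M Q) != (#|F| ^ 2 - #|F| + 1)%N]|
   <= #|F| ^ (#|F| * #|F|) * (#|F|.-1 * #|F| ^ #|F|.-1) ^ m)%N.
Proof.
pose orth (u : 'rV[F]_n) := [set f : {ffun F -> F} | \sum_x pi_coord u (x, f x) == 0].
set Bad := [set Q | _].
have Bad_cover : Bad \subset \bigcup_(u | ~~ (u <= Dmx)%MS) [set Q in ffun_on (orth u)].
  apply/subsetP => Q; rewrite inE => rank_neq.
  have /row_subPn[r ker_r] : ~~ (kermx (M Q)^T <= Dmx)%MS.
    by apply: contra rank_neq => /mxrank_incmx_graph ->.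
  apply/bigcupP; exists (row r (kermx (M Q)^T)) => //.
  rewrite inE; apply/ffun_onP => i; rewrite inE -(mul_incmx_tr _ (fun i => Q i)).
  by rewrite -row_mul mulmx_ker row0 mxE.
apply: leq_trans (card_bigcup_le Bad_cover) _.
under eq_bigr do rewrite cardsE card_ffun_on card_ord.
apply: (@leq_trans (\sum_(u : 'rV[F]_n | ~~ (u <= Dmx)%MS) (#|F|.-1 * #|F| ^ #|F|.-1) ^ m)).
  apply: leq_sum => u u_notin_D; have [->|m_gt0] := posnP m; first by rewrite !expn0.
  by rewrite leq_exp2r //; exact: card_graph_orth_le.
rewrite sum_nat_cond_const leq_mul2r (leq_trans (subset_leq_card (subsetT _))) ?orbT //.
by rewrite cardsT card_mx card_prod mul1n.
Qed.
End IncidenceKernel.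

Section RealBounds.
Local Open Scope R_scope.

Lemma INR_muln m n : INR (m * n)%N = INR m * INR n.
Proof. exact: mult_INR. Qed.

Lemma INR_expn m n : INR (m ^ n)%N = INR m ^ n.
Proof. by elim: n => [|n IHn]; rewrite ?expn0 // expnS INR_muln IHn. Qed.

Lemma exp_pow (x : R) n : exp x ^ n = exp (INR n * x).
Proof.
elim: n => [|n IHn]; first by rewrite Rmult_0_l exp_0.
by rewrite S_INR /= IHn -exp_plus; congr exp; ring.
Qed.

Lemma pow_le_exp_mul (x : R) n : 0 <= x -> x ^ n <= exp (INR n * x).
Proof.
move=> x_ge0; rewrite -exp_pow; apply: pow_incr; split => //.
by have := exp_ineq1_le x; lra.
Qed.

Lemma pow_sub1_le_exp (x : R) n : 1 <= x -> (x - 1) ^ n <= x ^ n * exp (- (INR n / x)).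
Proof.
move=> x_ge1; have -> : - (INR n / x) = INR n * - / x by field; lra.
rewrite -exp_pow -Rpow_mult_distr; apply: pow_incr; split; first lra.
have -> : x - 1 = x * (1 + - / x) by field; lra.
by apply: Rmult_le_compat_l; [lra | exact: exp_ineq1_le].
Qed.

(* After division by (q^q)^m this is q^(q^2) (1 - 1/q)^m <= exp (q^3 - m/q) <= exp (-L). *)
Lemma card_bound_le_exp (q m L : nat) : (1 <= q)%N -> (q ^ 4 + L * q <= m)%N ->
  INR (q ^ (q * q) * ((q - 1) * q ^ (q - 1)) ^ m)
  <= exp (- INR L) * INR ((q ^ q) ^ m).
Proof.
move=> q_ge1 m_ge; have qq : (q ^ q = q * q ^ (q - 1))%N by rewrite -expnS subn1 prednK.
rewrite qq !(INR_muln, INR_expn) minus_INR; last exact/leP.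
change (INR 1) with 1.
set Q := INR q; have Q_ge1 : 1 <= Q by apply: (le_INR 1); apply/leP.
have m_geR : Q ^ 4 + INR L * Q <= INR m.
  by rewrite /Q -INR_expn -INR_muln -plus_INR; apply: le_INR; apply/leP.
rewrite !Rpow_mult_distr; set A := (Q ^ (q - 1)) ^ m.
have A_gt0 : 0 < A by apply/pow_lt/pow_lt; lra.
have expo : INR (q * q)%N * Q - INR m / Q <= - INR L.
  rewrite INR_muln -/Q; have : INR L + Q * Q * Q <= INR m / Q; last lra.
  apply: (Rmult_le_reg_r Q); first lra.
  have -> : INR m / Q * Q = INR m by field; lra.
  by have -> : (INR L + Q * Q * Q) * Q = Q ^ 4 + INR L * Q by ring.
apply: (Rle_trans _ (exp (INR (q * q)%N * Q) * (Q ^ m * exp (- (INR m / Q))) * A)).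
  rewrite -Rmult_assoc; apply: Rmult_le_compat_r; first lra.
  apply: Rmult_le_compat.
  - by apply: pow_le; lra.
  - by apply: pow_le; lra.
  - by apply: pow_le_exp_mul; lra.
  - exact: pow_sub1_le_exp.
have -> : exp (INR (q * q)%N * Q) * (Q ^ m * exp (- (INR m / Q))) * A
  = exp (INR (q * q)%N * Q - INR m / Q) * (Q ^ m * A) by rewrite /Rminus exp_plus; ring.
apply: Rmult_le_compat_r; first by apply: Rmult_le_pos; [apply: pow_le|]; lra.
by case: expo => [lt|->]; [left; exact: exp_increasing | right].
Qed.

Lemma frac_card_ge (T : finType) (A : {set T}) (e : R) : (0 < #|T|)%N ->
  INR #|~: A| <= e * INR #|T| -> Rge (INR #|A| / INR #|T|) (1 - e).
Proof.
move=> T_gt0 compl_le; have T_gt0R : 0 < INR #|T| by apply/lt_0_INR/ltP.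
have card_split : INR #|A| + INR #|~: A| = INR #|T|.
  by rewrite -(cardsC A) -plus_INR.
apply: Rle_ge; apply: (Rmult_le_reg_r (INR #|T|)) => //.
rewrite /Rdiv Rmult_assoc Rinv_l; lra.
Qed.
End RealBounds.

Lemma lam_pow_bound (lam q : nat) : (4 <= lam)%N -> (q <= 2 * lam ^ 2)%N ->
  (q ^ 4 + lam ^ 97 * q <= lam ^ 100)%N.
Proof.
move=> lam_ge4 q_le.
have q4 : (q ^ 4 <= 16 * lam ^ 8)%N.
  by rewrite (_ : 16 * lam ^ 8 = (2 * lam ^ 2) ^ 4)%N ?leq_exp2r // expnMn -expnM.
have lam91 : (lam * lam <= lam ^ 91)%N by rewrite mulnn leq_pexp2l // (leq_trans _ lam_ge4).
have e99 : (lam ^ 99 = lam ^ 91 * lam ^ 8)%N by rewrite -expnD.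
have e100 : (lam ^ 100 = lam * lam ^ 99)%N by rewrite -expnS.
have e97 : (lam ^ 97 * (2 * lam ^ 2) = 2 * lam ^ 99)%N by rewrite mulnCA -expnD.
move: q_le q4 lam91 e99 e100 e97.
generalize (q ^ 4)%N (lam ^ 2)%N (lam ^ 8)%N (lam ^ 91)%N (lam ^ 97)%N (lam ^ 99)%N (lam ^ 100)%N.
nia.
Qed.

Theorem mainTheorem1 :
  exists N : nat, forall lam : nat, (N <= lam)%N -> (0 < lam)%N ->
  forall F : finFieldType,
    (lam ^ 2 <= 2 * #|F|)%N -> (#|F| <= 2 * lam ^ 2)%N ->
  forall pi : {perm F * F},
    (* (i) structured case: polynomials of degree <= lam *)
    (forall p : 'I_(lam ^ 100) -> {poly F},
        (forall i, (size (p i) <= lam.+1)%N) ->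
        algo (fun i => graph_set pi (fun x => ((p i).[x])%R)) = Case1)
    /\
    (* (ii) random case: uniform q_i : F -> F, independent *)
    Rge (Rdiv (INR #|[set Q : {ffun 'I_(lam ^ 100) -> {ffun F -> F}} |
                        is_case2 (algo (fun i => graph_set pi (Q i)))]|)
              (INR #|{: {ffun 'I_(lam ^ 100) -> {ffun F -> F}}}|))
        (Rminus R1 (exp (Ropp (INR (lam ^ 97)))))
    /\
    Rge (Rdiv (INR #|[set Q : {ffun 'I_(lam ^ 100) -> {ffun F -> F}} |
                        \rank (incmx (fun i => graph_set pi (Q i)))
                          == (#|F| ^ 2 - #|F| + 1)%N]|)
              (INR #|{: {ffun 'I_(lam ^ 100) -> {ffun F -> F}}}|))
        (Rminus R1 (exp (Ropp (INR (lam ^ 97))))).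
Proof.
exists 4%N => lam lam_ge4 _ F lam_le q_le pi.
have q_gt1 : (1 < #|F|)%N := card_finNzRing_gt1 F.
split.
  move=> p sz_p; rewrite /algo ifT //; apply: leq_ltn_trans (mxrank_incmx_poly_graph _ _) _.
    by move=> i; apply: leq_trans (sz_p i) _; rewrite -mulnn in lam_le; nia.
  by rewrite -mulnn; nia.
pose Bad := [set Q : {ffun 'I_(lam ^ 100) -> {ffun F -> F}} |
  \rank (incmx (fun i => graph_set pi (Q i))) != (#|F| ^ 2 - #|F| + 1)%N].
have card_T : #|{: {ffun 'I_(lam ^ 100) -> {ffun F -> F}}}| = ((#|F| ^ #|F|) ^ lam ^ 100)%N.
  by rewrite !card_ffun card_ord.
have T_gt0 : (0 < #|{: {ffun 'I_(lam ^ 100) -> {ffun F -> F}}}|)%N.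
  by rewrite card_T !expn_gt0 ltnW.
have Bad_le : Rle (INR #|Bad|)
    (Rmult (exp (Ropp (INR (lam ^ 97)))) (INR #|{: {ffun 'I_(lam ^ 100) -> {ffun F -> F}}}|)).
  rewrite card_T; apply: Rle_trans (card_bound_le_exp (ltnW q_gt1) (lam_pow_bound lam_ge4 q_le)).
  by apply/le_INR/leP; rewrite subn1; exact: card_incmx_graph_rank_neq.
split; apply: frac_card_ge => //; apply: Rle_trans Bad_le.
all: apply/le_INR/leP/subset_leq_card/subsetP => Q; rewrite !inE //.
by rewrite /algo; case: ltnP => // rank_lt _; rewrite neq_ltn rank_lt.
Qed.
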